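(* Let $(H;\langle\cdot,\cdot\rangle)$ be a real inner product space with norm $\|\cdot\|$, and let $a,b,x,y\in H\setminus\{0\}$. (i) If there exist $\delta_1,\delta_2\in(0,1]$ with $\delta_1+\delta_2\ge 1$ such that $$\frac{\langle x,a\rangle}{\|x\|\,\|a\|}\ge\delta_1,\qquad \frac{\langle y,a\rangle}{\|y\|\,\|a\|}\ge\delta_2,$$ then $$\frac{\langle x,y\rangle}{\|x\|\,\|y\|}\ge \frac12(\delta_1+\delta_2)^2-\frac32\qquad(\ge -1).$$ (ii) If there exists $\mu_1\in\mathbb{R}$ with $0\le\mu_1\le 1$ such that $\mu_1\|a\|\,\|b\|\le \dfrac{\langle x,a\rangle\langle x,b\rangle}{\|x\|^2}$, then $$-1\le 2\mu_1-1\le \frac{\langle a,b\rangle}{\|a\|\,\|b\|}.$$ If there exists $\mu_2\in\mathbb{R}$ with $-1\le\mu_2\le 0$ such that $\dfrac{\langle x,a\rangle\langle x,b\rangle}{\|x\|^2}\le \mu_2\|a\|\,\|b\|$, then $$\frac{\langle a,b\rangle}{\|a\|\,\|b\|}\le 2\mu_2+1\le 1.$$ *)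

From mathcomp Require Import all_boot all_order all_algebra.
From mathcomp Require Import reals.
Set Implicit Arguments. Unset Strict Implicit. Unset Printing Implicit Defensive.
Import Order.TTheory GRing.Theory Num.Theory.
Local Open Scope ring_scope.

Definition is_inner_product (R : realType) (V : lmodType R) (ip : V -> V -> R) : Prop :=
  [/\ (forall x y : V, ip x y = ip y x),
      (forall (c : R) (x y z : V), ip (c *: x + y) z = c * ip x z + ip y z),
      (forall x : V, 0 <= ip x x) &
      (forall x : V, ip x x = 0 -> x = 0)].

Definition ipnorm (R : realType) (V : lmodType R) (ip : V -> V -> R) (x : V) : R :=
  Num.sqrt (ip x x).

From mathcomp Require Import all_boot all_order all_algebra.
From mathcomp Require Import reals.
From mathcomp Require Import ring lra.
Set Implicit Arguments. Unset Strict Implicit. Unset Printing Implicit Defensive.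
Import Order.TTheory GRing.Theory Num.Theory.
Local Open Scope ring_scope.

(* Both parts are Cauchy-Schwarz applied to a well-chosen vector.  For (i), let
   u, v, e be the unit vectors along x, y, a: then
   d1 + d2 <= <u + v, e> <= ||u + v|| and ||u + v||^2 = 2 + 2 <u, v>, which even
   gives the sharper bound (d1 + d2)^2 / 2 - 1.  For (ii), the reflection r of a
   in the line through x has ||r|| = ||a|| and
   <r, b> = 2 <x, a> <x, b> / ||x||^2 - <a, b>, so this quantity has absolute
   value at most ||a|| ||b||; the hypotheses on mu1, mu2 then bound <a, b>. *)

Section InnerProduct.

Variables (R : realType) (V : lmodType R) (ip : V -> V -> R).
Hypothesis Hip : is_inner_product ip.

Local Notation "''[' u , v ]" := (ip u v) (format "''[' u ,  v ]").
Local Notation "`| u |_ip" := (ipnorm ip u) (format "`| u |_ip").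

Lemma ipC u v : '[u, v] = '[v, u].
Proof. by case: Hip. Qed.

Lemma ip_ge0 u : 0 <= '[u, u].
Proof. by case: Hip. Qed.

Lemma ipDZl c u v w : '[c *: u + v, w] = c * '[u, w] + '[v, w].
Proof. by case: Hip. Qed.

Lemma ip0l w : '[0, w] = 0.
Proof. by have := ipDZl 1 0 0 w; rewrite scale1r addr0 mul1r => h; lra. Qed.

Lemma ip_eq0 u : ('[u, u] == 0) = (u == 0).
Proof.
by case: Hip => _ _ _ ip0; apply/eqP/eqP => [/ip0 // | ->]; rewrite ip0l.
Qed.

Lemma ipDl u v w : '[u + v, w] = '[u, w] + '[v, w].
Proof. by rewrite -{1}[u]scale1r ipDZl mul1r. Qed.

Lemma ipZl c u w : '[c *: u, w] = c * '[u, w].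
Proof. by rewrite -[c *: u]addr0 ipDZl ip0l addr0. Qed.

Lemma ipNl u w : '[- u, w] = - '[u, w].
Proof. by rewrite -scaleN1r ipZl mulN1r. Qed.

Lemma ipNr u w : '[w, - u] = - '[w, u].
Proof. by rewrite ipC ipNl ipC. Qed.

Lemma ipDr u v w : '[w, u + v] = '[w, u] + '[w, v].
Proof. by rewrite ipC ipDl !(ipC w). Qed.

Lemma ipZr c u w : '[w, c *: u] = c * '[w, u].
Proof. by rewrite ipC ipZl ipC. Qed.

Definition ipE := (ipDl, ipDr, ipNl, ipNr, ipZl, ipZr).

Lemma ip_CauchySchwarz u v : '[u, v] ^+ 2 <= '[u, u] * '[v, v].
Proof.
have [->|v0] := eqVneq v 0; first by rewrite ipC !ip0l expr0n mulr0.
have vv_gt0 : 0 < '[v, v] by rewrite lt_def ip_eq0 v0 ip_ge0.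
(* [w] is [<v, v>] times the component of [u] orthogonal to [v]. *)
pose w := '[v, v] *: u - '[u, v] *: v.
have ww : '[w, w] = '[v, v] * ('[u, u] * '[v, v] - '[u, v] ^+ 2).
  by rewrite !ipE [ip v u]ipC; ring.
by have := ip_ge0 w; rewrite ww pmulr_rge0 // subr_ge0.
Qed.

Lemma sqr_ipnorm u : `|u|_ip ^+ 2 = '[u, u].
Proof. exact/sqr_sqrtr/ip_ge0. Qed.

Lemma ipnorm_gt0 u : (0 < `|u|_ip) = (u != 0).
Proof. by rewrite sqrtr_gt0 lt_def ip_eq0 ip_ge0 andbT. Qed.

Lemma normr_ip_le u v : `|'[u, v]| <= `|u|_ip * `|v|_ip.
Proof.
rewrite -sqrtr_sqr -sqrtrM ?ip_ge0 // ler_sqrt ?mulr_ge0 ?ip_ge0 //.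
exact: ip_CauchySchwarz.
Qed.

Definition ipunit u := `|u|_ip^-1 *: u.

Lemma ip_ipunit u v : '[ipunit u, ipunit v] = '[u, v] / (`|u|_ip * `|v|_ip).
Proof. by rewrite !ipE invfM; ring. Qed.

Lemma ipunit_self u : u != 0 -> '[ipunit u, ipunit u] = 1.
Proof. by rewrite ip_ipunit -expr2 sqr_ipnorm -ip_eq0 => /divff. Qed.

Lemma ip_lower_bound_from_common_direction u v w (c1 c2 : R) :
  '[u, u] = 1 -> '[v, v] = 1 -> '[w, w] = 1 ->
  c1 <= '[u, w] -> c2 <= '[v, w] -> 0 <= c1 + c2 ->
  (c1 + c2) ^+ 2 / 2 - 1 <= '[u, v].
Proof.
move=> uu vv ww c1u c2v c12.
have c12_le : c1 + c2 <= '[u, w] + '[v, w] by exact: lerD.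
have : (c1 + c2) ^+ 2 <= ('[u, w] + '[v, w]) ^+ 2.
  by rewrite ler_sqr ?nnegrE // (le_trans c12 c12_le).
have := ip_CauchySchwarz (u + v) w.
rewrite !ipE [ip v u]ipC uu vv ww mulr1.
lra.
Qed.

Definition ipreflect x a := (2 * ('[x, a] / '[x, x])) *: x - a.

Lemma ipreflect_self x a : x != 0 -> '[ipreflect x a, ipreflect x a] = '[a, a].
Proof.
by rewrite -ip_eq0 => x0; rewrite !ipE [ip a x]ipC; field.
Qed.

Lemma ipreflectl x a b :
  '[ipreflect x a, b] = 2 * ('[x, a] * '[x, b] / '[x, x]) - '[a, b].
Proof. by rewrite !ipE; ring. Qed.

Lemma normr_ipreflect_le x a b : x != 0 ->
  `|2 * ('[x, a] * '[x, b] / '[x, x]) - '[a, b]| <= `|a|_ip * `|b|_ip.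
Proof.
move=> x0; rewrite -ipreflectl.
have := normr_ip_le (ipreflect x a) b.
by rewrite /ipnorm ipreflect_self.
Qed.

End InnerProduct.

Theorem theorem1p5 (R : realType) (V : lmodType R) (ip : V -> V -> R)
  (Hip : is_inner_product ip) (a b x y : V)
  (ha : a != 0) (hb : b != 0) (hx : x != 0) (hy : y != 0) :
  (* (i) *)
  (forall d1 d2 : R, 0 < d1 <= 1 -> 0 < d2 <= 1 -> 1 <= d1 + d2 ->
     d1 <= ip x a / (ipnorm ip x * ipnorm ip a) ->
     d2 <= ip y a / (ipnorm ip y * ipnorm ip a) ->
     (d1 + d2) ^+ 2 / 2 - 3 / 2 <= ip x y / (ipnorm ip x * ipnorm ip y) /\
     -1 <= (d1 + d2) ^+ 2 / 2 - 3 / 2) /\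
  (* (ii), first part *)
  (forall mu1 : R, 0 <= mu1 <= 1 ->
     mu1 * ipnorm ip a * ipnorm ip b <= ip x a * ip x b / ipnorm ip x ^+ 2 ->
     -1 <= 2 * mu1 - 1 /\ 2 * mu1 - 1 <= ip a b / (ipnorm ip a * ipnorm ip b)) /\
  (* (ii), second part *)
  (forall mu2 : R, -1 <= mu2 <= 0 ->
     ip x a * ip x b / ipnorm ip x ^+ 2 <= mu2 * ipnorm ip a * ipnorm ip b ->
     ip a b / (ipnorm ip a * ipnorm ip b) <= 2 * mu2 + 1 /\ 2 * mu2 + 1 <= 1).
Proof.
have ab_gt0 : 0 < ipnorm ip a * ipnorm ip b by rewrite mulr_gt0 ?(ipnorm_gt0 Hip).
have /ler_normlP[reflect_lb reflect_ub] := normr_ipreflect_le Hip a b hx.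
rewrite (sqr_ipnorm Hip); split; last split.
- move=> d1 d2 _ _ d12_ge1; rewrite -!(ip_ipunit Hip) => xa ya.
  have := ip_lower_bound_from_common_direction Hip (ipunit_self Hip hx)
    (ipunit_self Hip hy) (ipunit_self Hip ha) xa ya (le_trans ler01 d12_ge1).
  have : 1 <= (d1 + d2) ^+ 2 by exact: exprn_ege1.
  by split; lra.
- move=> mu1 /andP[mu1_ge0 mu1_le1] hmu1; split; first lra.
  by rewrite ler_pdivlMr //; lra.
- move=> mu2 /andP[mu2_geN1 mu2_le0] hmu2; split; last lra.
  by rewrite ler_pdivrMr //; lra.
Qed.
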